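(* Let $A,N_1,\dots,N_m\in\mathbb R^{n\times n}$ with $\sigma(A)\subset\mathbb C_-$, and for $x_0\in\mathbb R^n$ and $u=(u_1,\dots,u_m)^T\in L^2$ let $x(t,x_0,0)$, $t\ge0$, denote the solution to $\dot x(t)=Ax(t)+\sum_{k=1}^m N_kx(t)u_k(t)$, $x(0)=x_0$. Then there exist $\gamma,k_1,k_2>0$ such that $$\|x(t,x_0,0)\|_2^2\le\exp\{\gamma^2\|u^0\|_{L^2}^2\}\,\|x_0\|_2^2\,k_1e^{-k_2t}\qquad\text{for all }t\ge0$$ for all $u\in L^2$ (and all $x_0$).
   Context: $\mathbb C_-=\{z\in\mathbb C:\Re z<0\}$ and $\sigma(\cdot)$ denotes the spectrum. $L^2$ is the set of $u:[0,\infty)\to\mathbb R^m$ with $\|u\|_{L^2}^2=\int_0^\infty u^T(s)u(s)\,ds<\infty$. The vector $u^0=(u^0_1,\dots,u^0_m)^T$ is defined by $u^0_k\equiv 0$ if $N_k=0$ and $u^0_k=u_k$ otherwise. *)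

From HB Require Import structures.
From mathcomp Require Import all_boot all_order all_algebra.
From mathcomp Require Import all_classical all_reals all_analysis.
From mathcomp Require Import complex.
Set Implicit Arguments. Unset Strict Implicit. Unset Printing Implicit Defensive.
Import Order.TTheory GRing.Theory Num.Theory.
Local Open Scope classical_set_scope.
Local Open Scope ring_scope.

Definition spectrum_in_Cminus (R : rcfType) (n : nat) (A : 'M[R]_n) : Prop :=
  forall z : R[i], eigenvalue (map_mx (fun r : R => (r%:C)%C) A) z -> Re z < 0.

Definition sqnorm2 (R : pzRingType) (n : nat) (v : 'cV[R]_n) : R :=
  \sum_(i < n) v i 0 ^+ 2.

Definition L2fun (R : realType) (f : R -> R) : Prop :=
  measurable_fun (`[0%R, +oo[ : set R) f /\
  (\int[lebesgue_measure]_(s in (`[0%R, +oo[ : set R)) ((f s) ^+ 2)%:E < +oo)%E.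

Definition L2input (R : realType) (m : nat) (u : 'I_m -> R -> R) : Prop :=
  forall k, L2fun (u k).

Definition L2sqnorm (R : realType) (f : R -> R) : R :=
  Rintegral lebesgue_measure (`[0%R, +oo[ : set R) (fun s => (f s) ^+ 2).

Definition u0 (R : realType) (n m : nat) (N : 'I_m -> 'M[R]_n)
  (u : 'I_m -> R -> R) : 'I_m -> R -> R :=
  fun k => if N k == 0 then (fun _ => 0) else u k.

(* ||u||_{L^2}^2 = \int_0^oo u^T(s) u(s) ds = sum_k ||u_k||^2. *)
Definition L2sqnorm_vec (R : realType) (m : nat) (u : 'I_m -> R -> R) : R :=
  \sum_(k < m) L2sqnorm (u k).

Definition bilin_rhs (R : realType) (n m : nat) (A : 'M[R]_n)
  (N : 'I_m -> 'M[R]_n) (u : 'I_m -> R -> R) (x : R -> 'cV[R]_n) (s : R)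
  : 'cV[R]_n :=
  A *m x s + \sum_(k < m) (u k s) *: (N k *m x s).

(* x is a (Caratheodory) solution on [0,oo) of
   xdot = A x + sum_k N_k x u_k,  x(0) = x0, i.e. for all t >= 0 and every
   component i the integrand is Lebesgue integrable on [0,t] and
   x(t) = x0 + \int_0^t (A x(s) + sum_k N_k x(s) u_k(s)) ds. *)
Definition is_bilin_solution (R : realType) (n m : nat) (A : 'M[R]_n)
  (N : 'I_m -> 'M[R]_n) (u : 'I_m -> R -> R) (x0 : 'cV[R]_n)
  (x : R -> 'cV[R]_n) : Prop :=
  forall t : R, 0 <= t -> forall i : 'I_n,
    lebesgue_measure.-integrable (`[0%R, t] : set R)
       (fun s => (bilin_rhs A N u x s i 0)%:E) /\
    x t i 0 = x0 i 0 +
      Rintegral lebesgue_measure (`[0%R, t] : set R) (fun s => bilin_rhs A N u x s i 0).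

From HB Require Import structures.
From mathcomp Require Import all_boot all_order all_algebra.
From mathcomp Require Import all_classical all_reals all_analysis.
From mathcomp Require Import complex.
From mathcomp Require Import ring lra.
From mathcomp Require Import measurable_realfun.
Set Implicit Arguments. Unset Strict Implicit. Unset Printing Implicit Defensive.
Import Order.TTheory GRing.Theory Num.Theory.
Import numFieldNormedType.Exports.
Local Open Scope classical_set_scope.
Local Open Scope ring_scope.

(* Triangularise A = U^-1 T U (Schur) and conjugate T by diag(1, eps, ...,
   eps^(n-1)): for small eps the part of T below the diagonal becomes
   negligible against the spectral gap, which yields a quadratic Lyapunov
   function V x = x^T P x with 2 x^T P A x <= - c |x|^2.  By AM-GM the bilinear
   terms then give 2 x^T P xdot <= (- a + b |u^0(t)|^2) V(x) along solutions
   (inputs with N_k = 0 do not contribute), and Gronwall's lemma gives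
   V(x t) <= V(x0) exp(b ||u^0||^2 - a t); V is comparable to |x|^2.
   Solutions are only absolutely continuous, so Gronwall's lemma is proved by
   subdividing [0, T] into N pieces on which V grows by a factor at most
   1 + \int h up to an O(1/N^2) error, and letting N grow. *)

Lemma sum_pairD (R : nmodType) (n : nat) (a : 'I_n -> R) :
  \sum_(i < n) \sum_(j < n) (a i + a j) = (\sum_(i < n) a i) *+ (2 * n).
Proof.
under eq_bigr => i _ do rewrite big_split /= sumr_const card_ord.
by rewrite big_split /= sumr_const card_ord sumrMnl -mulrnDr addnn mul2n.
Qed.

Lemma sqr_sum_le (R : realFieldType) (n : nat) (a : 'I_n -> R) :
  (\sum_(i < n) a i) ^+ 2 <= n%:R * \sum_(i < n) a i ^+ 2.
Proof.
have amgm i j : a i * a j <= (a i ^+ 2 + a j ^+ 2) / 2.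
  by have := sqr_ge0 (a i - a j); rewrite sqrrB; lra.
rewrite expr2 mulr_suml.
apply: le_trans (_ : _ <= \sum_(i < n) \sum_(j < n) (a i ^+ 2 + a j ^+ 2) / 2) _.
  by apply: ler_sum => i _; rewrite mulr_sumr; apply: ler_sum => j _.
under eq_bigr => i _ do rewrite -mulr_suml.
rewrite -mulr_suml sum_pairD -[_ *+ (2 * n)]mulr_natl natrM ler_pdivrMr //.
by rewrite [leRHS]mulrC mulrA.
Qed.

Lemma sqnorm2_ge0 (R : realDomainType) (n : nat) (y : 'cV[R]_n) : 0 <= sqnorm2 y.
Proof. by rewrite sumr_ge0 // => i _; rewrite sqr_ge0. Qed.

Section BilinearForm.
Variables (R : realFieldType) (n : nat).
Implicit Types (P Q : 'M[R]_n) (a b c v : 'cV[R]_n).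

Definition bform P a b := (a^T *m P *m b) 0 0.
Definition norm1 a := \sum_(i < n) `|a i 0|.
Definition mxnorm1 P := \sum_(i < n) \sum_(j < n) `|P i j|.

Lemma bformE P a b : bform P a b = \sum_(j < n) (\sum_(i < n) a i 0 * P i j) * b j 0.
Proof.
rewrite /bform mxE; apply: eq_bigr => j _; rewrite !mxE.
by congr (_ * _); apply: eq_bigr => i _; rewrite mxE.
Qed.

Lemma bformDl P a b c : bform P (a + b) c = bform P a c + bform P b c.
Proof. by rewrite /bform linearD /= !mulmxDl mxE. Qed.

Lemma bformDr P a b c : bform P c (a + b) = bform P c a + bform P c b.
Proof. by rewrite /bform !mulmxDr mxE. Qed.

Lemma bformNl P a c : bform P (- a) c = - bform P a c.
Proof. by rewrite /bform linearN /= !mulNmx mxE. Qed.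

Lemma bformNr P a c : bform P c (- a) = - bform P c a.
Proof. by rewrite /bform !mulmxN mxE. Qed.

Lemma bformZr P k a c : bform P c (k *: a) = k * bform P c a.
Proof. by rewrite /bform -!scalemxAr mxE. Qed.

Lemma bform_sumr P a (I : Type) (r : seq I) (F : I -> 'cV[R]_n) :
  bform P a (\sum_(i <- r) F i) = \sum_(i <- r) bform P a (F i).
Proof.
elim/big_rec2: _ => [|i y1 y2 _ <-]; first by rewrite /bform mulmx0 mxE.
by rewrite bformDr.
Qed.

Lemma bform_mulmxr P Q a : bform P a (Q *m a) = bform (P *m Q) a a.
Proof. by rewrite /bform !mulmxA. Qed.

Lemma bformC P a b : P^T = P -> bform P a b = bform P b a.
Proof.
move=> sP; rewrite /bform -[in RHS](trmxK (b^T *m P *m a)) [in RHS]mxE.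
by rewrite !trmx_mul trmxK sP mulmxA.
Qed.

Lemma norm1_ge0 a : 0 <= norm1 a.
Proof. exact: sumr_ge0. Qed.

Lemma ler_norm1 a i : `|a i 0| <= norm1 a.
Proof. by rewrite /norm1 (bigD1 i) //= lerDl sumr_ge0. Qed.

Lemma norm1D a b : norm1 (a + b) <= norm1 a + norm1 b.
Proof. by rewrite /norm1 -big_split ler_sum // => i _; rewrite mxE ler_normD. Qed.

Lemma mxnorm1_ge0 P : 0 <= mxnorm1 P.
Proof. by rewrite sumr_ge0 // => i _; rewrite sumr_ge0. Qed.

Lemma bform_norm1_le P a b : `|bform P a b| <= mxnorm1 P * norm1 a * norm1 b.
Proof.
rewrite bformE (le_trans (ler_norm_sum _ _ _)) // /mxnorm1 exchange_big /=.
rewrite mulr_suml mulr_suml; apply: ler_sum => j _.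
rewrite normrM; apply: ler_pM; rewrite ?normr_ge0 ?ler_norm1 //.
rewrite mulr_suml; apply: (le_trans (ler_norm_sum _ _ _)); apply: ler_sum => i _.
by rewrite normrM mulrC ler_wpM2l ?ler_norm1.
Qed.

Lemma norm1_sqr_le a : norm1 a ^+ 2 <= n%:R * sqnorm2 a.
Proof.
apply: le_trans (sqr_sum_le (fun i => `|a i 0|)) _.
suff -> : \sum_(i < n) `|a i 0| ^+ 2 = sqnorm2 a by [].
by apply: eq_bigr => i _; rewrite real_normK ?num_real.
Qed.

Lemma bform_sqnorm2_le P a : `|bform P a a| <= mxnorm1 P * n%:R * sqnorm2 a.
Proof.
apply: le_trans (bform_norm1_le _ _ _) _.
by rewrite -mulrA -expr2 -mulrA ler_wpM2l ?mxnorm1_ge0 ?norm1_sqr_le.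
Qed.

Lemma bform_le_sqnorm2 P a : bform P a a <= (mxnorm1 P * n%:R + 1) * sqnorm2 a.
Proof.
apply: le_trans (ler_norm _) _; apply: le_trans (bform_sqnorm2_le _ _) _.
by rewrite ler_wpM2r ?sqnorm2_ge0 // lerDl.
Qed.

(* [a] is an intermediate point of a path from [b] to [c] and [v] its velocity
   at [a]: the differential inequality at [a] is transferred to the endpoints
   at the price of a term linear in the length [Psi] of the path. *)
Lemma bform_perturb_le P a b c v (h psi Psi X : R) : P^T = P ->
  2 * bform P a v <= h * bform P a a -> norm1 (c - a) <= Psi -> norm1 (a - b) <= Psi ->
  norm1 v <= psi -> `|h| <= psi -> norm1 a <= X -> norm1 b <= X ->
  bform P v (c + b) <= h * bform P b b + psi * (2 * mxnorm1 P * (1 + X) * Psi).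
Proof.
move=> sP hv ca_le ab_le v_le h_le a_le b_le.
have Psi0 : 0 <= Psi by apply: le_trans (norm1_ge0 _) ca_le.
have psi0 : 0 <= psi by apply: le_trans (normr_ge0 _) h_le.
have X0 : 0 <= X by apply: le_trans (norm1_ge0 _) a_le.
have p0 := mxnorm1_ge0 P.
have -> : c + b = 2%:R *: a + (c - a) - (a - b).
  by rewrite scaler_nat mulr2n; apply/matrixP => i j; rewrite !mxE; ring.
have eab : bform P a a = bform P b b + bform P (a - b) (a + b).
  by rewrite bformDl bformNl !bformDr (bformC b a sP); ring.
have B1 : `|bform P (a - b) (a + b)| <= mxnorm1 P * Psi * (2 * X).
  apply: le_trans (bform_norm1_le _ _ _) _.
  apply: ler_pM; rewrite ?mulr_ge0 ?norm1_ge0 ?ler_wpM2l //.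
  by apply: le_trans (norm1D _ _) _; lra.
have B2 : `|bform P v (c - a)| <= mxnorm1 P * psi * Psi.
  apply: le_trans (bform_norm1_le _ _ _) _.
  by apply: ler_pM; rewrite ?mulr_ge0 ?norm1_ge0 // ler_wpM2l.
have B3 : `|bform P v (a - b)| <= mxnorm1 P * psi * Psi.
  apply: le_trans (bform_norm1_le _ _ _) _.
  by apply: ler_pM; rewrite ?mulr_ge0 ?norm1_ge0 // ler_wpM2l.
have B4 : h * bform P (a - b) (a + b) <= psi * (mxnorm1 P * Psi * (2 * X)).
  by apply: le_trans (ler_norm _) _; rewrite normrM ler_pM.
set d1 := c - a in B2 *; set d2 := a - b in B1 B3 B4 *.
rewrite bformDr bformNr bformDr bformZr (bformC v a sP).
move: B2 B3 => /ler_normlP [B2a B2b] /ler_normlP [B3a B3b].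
rewrite eab in hv; nra.
Qed.

End BilinearForm.


Section IntegralFacts.
Variable R : realType.
Local Notation mu := (@lebesgue_measure R).

Lemma integrable_sumR d (T : measurableType d) (nu : {measure set T -> \bar R})
    (D : set T) (I : Type) (s : seq I) (g : I -> T -> R) : measurable D ->
  (forall i, nu.-integrable D (EFin \o g i)) ->
  nu.-integrable D (EFin \o (fun x => \sum_(i <- s) g i x)).
Proof.
move=> mD ig; apply: (eq_integrable _ _ _ _ (integrable_sum mD s (fun j _ => ig j))) => // x _.
by rewrite /= sumEFin.
Qed.

Lemma Rintegral_sum d (T : measurableType d) (nu : {measure set T -> \bar R})
    (D : set T) (I : Type) (s : seq I) (g : I -> T -> R) : measurable D ->
  (forall i, nu.-integrable D (EFin \o g i)) ->
  \int[nu]_(x in D) (\sum_(i <- s) g i x) = \sum_(i <- s) \int[nu]_(x in D) g i x.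
Proof.
move=> mD ig; elim: s => [|i s IH].
  by under eq_Rintegral do rewrite big_nil; rewrite big_nil Rintegral_cst // mul0r.
under eq_Rintegral do rewrite big_cons.
by rewrite RintegralD ?IH ?big_cons //; exact: integrable_sumR.
Qed.

Lemma integrableS_itv_cc (g : R -> R) (a b c d : R) : a <= c -> d <= b ->
  mu.-integrable `[a, b] (EFin \o g) -> mu.-integrable `[c, d] (EFin \o g).
Proof.
move=> ac db; apply: integrableS => //.
by apply: subset_itvScc; rewrite bnd_simp.
Qed.

Lemma integrableS_itv_oc (g : R -> R) (a b c d : R) : a <= c -> d <= b ->
  mu.-integrable `[a, b] (EFin \o g) -> mu.-integrable `]c, d] (EFin \o g).
Proof.
move=> ac db /(integrableS_itv_cc ac db); apply: integrableS => //.
exact: subset_itv_oc_cc.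
Qed.

Lemma RintegralB_itv0 (g : R -> R) (a b : R) : 0 <= a -> a <= b ->
  mu.-integrable `[0, b] (EFin \o g) ->
  \int[mu]_(x in `[0, b]) g x - \int[mu]_(x in `[0, a]) g x =
  \int[mu]_(x in `]a, b]) g x.
Proof. by move=> a0 ab ig; rewrite Rintegral_itvB // bnd_simp. Qed.

Lemma Rintegral_itv_point (g : R -> R) (a : R) : \int[mu]_(x in `[a, a]) g x = 0.
Proof. by rewrite set_itv1 Rintegral_set1. Qed.

Lemma integrable_cst_itv (k a b : R) : mu.-integrable `[a, b] (EFin \o cst k).
Proof.
apply: measurable_bounded_integrable => //=; last exact: bounded_cst.
by rewrite lebesgue_measure_itv /=; case: ifPn => // _; rewrite -EFinB ltry.
Qed.

Lemma Rintegral_cst_itv0 (k t : R) : 0 <= t -> \int[mu]_(x in `[0, t]) k = k * t.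
Proof.
move=> t0; rewrite Rintegral_cst //; congr (_ * _).
have := lebesgue_measure_itv `[0, t]; rewrite /= lte_fin.
case: ltrP => [_ ->|tle ->]; first by rewrite /= subr0.
by apply/esym/le_anti; rewrite tle t0.
Qed.

End IntegralFacts.

Lemma discrete_gronwall (R : realType) (q H : nat -> R) (e E : R) (N : nat) :
  0 <= e -> H 0%N = 0 -> (forall k, 0 <= q k) ->
  (forall k, (k <= N)%N -> 1 <= expR (H k) * E) ->
  (forall k, (k < N)%N -> q k.+1 <= q k * (1 + (H k.+1 - H k)) + e) ->
  q N <= expR (H N) * (q 0%N + N%:R * (e * E)).
Proof.
move=> e0 H0 q0 HE step.
suff ind k : (k <= N)%N -> q k <= expR (H k) * (q 0%N + k%:R * (e * E)) by exact: ind.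
elim: k => [_|k IH kN]; first by rewrite H0 expR0 mul0r addr0 mul1r.
set dH := H k.+1 - H k.
have expH : expR (H k.+1) = expR (H k) * expR dH by rewrite -expRD addrC subrK.
have grow : q k * (1 + dH) <= q k * expR dH by rewrite ler_wpM2l ?q0 ?expR_ge1Dx.
have qk : q k * expR dH <= expR (H k) * (q 0%N + k%:R * (e * E)) * expR dH.
  by rewrite ler_wpM2r ?expR_ge0 // IH // ltnW.
have eE : e <= expR (H k.+1) * E * e by rewrite ler_peMl // HE.
apply: le_trans (step k kN) _.
have -> : expR (H k.+1) * (q 0%N + k.+1%:R * (e * E)) =
    expR (H k) * (q 0%N + k%:R * (e * E)) * expR dH + expR (H k.+1) * E * e.
  by rewrite -natr1 expH; ring.
exact: lerD (le_trans grow qk) eE.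
Qed.

Lemma ivt_partition (R : realType) (G : R -> R) (T : R) (N : nat) :
  0 < T -> (0 < N)%N -> {within `[0, T], continuous G} -> G 0 = 0 ->
  (forall a b, 0 <= a -> a <= b -> b <= T -> b - a <= G b - G a) ->
  exists tau : nat -> R, [/\ tau 0%N = 0, tau N = T,
    forall k, (k <= N)%N -> 0 <= tau k <= T /\ G (tau k) = k%:R * (G T / N%:R) &
    forall k, (k < N)%N -> tau k <= tau k.+1].
Proof.
move=> T0 N0 Gc G0 gap.
have GT : T <= G T by have := gap 0 T (lexx 0) (ltW T0) (lexx T); rewrite G0 !subr0.
have d0 : 0 < G T / N%:R by rewrite divr_gt0 ?ltr0n // (lt_le_trans T0).
have hit k : exists c, (k <= N)%N -> 0 <= c <= T /\ G c = k%:R * (G T / N%:R).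
  have [kN|] := leqP k N; last by exists 0.
  have kd : Num.min (G 0) (G T) <= k%:R * (G T / N%:R) <= Num.max (G 0) (G T).
    rewrite G0 min_l ?max_r ?(le_trans (ltW T0) GT) // mulr_ge0 ?(ltW d0) //=.
    by rewrite mulrCA ger_pMr ?(lt_le_trans T0 GT) // ler_pdivrMr ?ltr0n // mul1r ler_nat.
  by have [c c0T Gc_eq] := IVT (ltW T0) Gc kd; exists c.
have [tau Htau] := choice hit.
exists tau; split => [||k kN|k kN].
- have [/andP [t0 tT] Gt] := Htau 0%N (leq0n _).
  have := gap 0 (tau 0%N) (lexx 0) t0 tT; rewrite Gt G0 mul0r subrr subr0 => t0'.
  exact/le_anti/andP.
- have [/andP [t0 tT] Gt] := Htau N (leqnn _).
  have GN : N%:R * (G T / N%:R) = G T by rewrite mulrCA divff ?mulr1 // pnatr_eq0 -lt0n.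
  have := gap (tau N) T t0 tT (lexx T); rewrite Gt GN subrr subr_le0 => Tt.
  exact/le_anti/andP.
- exact: Htau.
- have [/andP [a0 aT] Ga] := Htau k (ltnW kN).
  have [/andP [b0 bT] Gb] := Htau k.+1 kN.
  rewrite leNgt; apply/negP => ba.
  have := gap _ _ b0 (ltW ba) aT; rewrite Ga Gb -natr1; lra.
Qed.

Section BformGronwall.
Variable R : realType.
Local Notation mu := (@lebesgue_measure R).
Variables (n : nat) (P : 'M[R]_n).
Hypothesis P_sym : P^T = P.
Hypothesis P_psd : forall y, 0 <= bform P y y.
Variables (T : R) (x f : R -> 'cV[R]_n) (x0 : 'cV[R]_n) (h : R -> R).
Hypothesis T_ge0 : 0 <= T.
Hypothesis f_int : forall i, mu.-integrable `[0, T] (EFin \o (fun r => f r i 0)).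
Hypothesis h_int : mu.-integrable `[0, T] (EFin \o h).
Hypothesis x_eq : forall t, 0 <= t <= T -> forall i,
  x t i 0 = x0 i 0 + \int[mu]_(s in `[0, t]) f s i 0.
Hypothesis x_ineq : forall r, 0 <= r <= T ->
  2 * bform P (x r) (f r) <= h r * bform P (x r) (x r).

Let psi r := norm1 (f r) + `|h r|.
Let F t := \int[mu]_(s in `[0, t]) psi s.
Let H t := \int[mu]_(s in `[0, t]) h s.
Let q t := bform P (x t) (x t).

Let psi_int : mu.-integrable `[0, T] (EFin \o psi).
Proof.
have f1_int : mu.-integrable `[0, T] (EFin \o (fun r => norm1 (f r))).
  by apply: integrable_sumR => // i; exact: integrable_norm.
exact: integrableD _ f1_int (integrable_norm h_int).
Qed.

Let psi_ge0 r : 0 <= psi r.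
Proof. by rewrite addr_ge0 ?norm1_ge0. Qed.

Let F_ge0 t : 0 <= F t.
Proof. exact: Rintegral_ge0. Qed.

Let FB a b : 0 <= a -> a <= b -> b <= T -> F b - F a = \int[mu]_(s in `]a, b]) psi s.
Proof. by move=> a0 ab bT; rewrite RintegralB_itv0 // (integrableS_itv_cc _ bT psi_int). Qed.

Let HB a b : 0 <= a -> a <= b -> b <= T -> H b - H a = \int[mu]_(s in `]a, b]) h s.
Proof. by move=> a0 ab bT; rewrite RintegralB_itv0 // (integrableS_itv_cc _ bT h_int). Qed.

Let F_mono a b : 0 <= a -> a <= b -> b <= T -> F a <= F b.
Proof. by move=> a0 ab bT; rewrite -subr_ge0 FB // Rintegral_ge0. Qed.

Let x_at0 : x 0 = x0.
Proof.
apply/matrixP => i j; rewrite (ord1 j) x_eq ?lexx ?T_ge0 //.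
by rewrite Rintegral_itv_point addr0.
Qed.

Let xB s t : 0 <= s -> s <= t -> t <= T -> forall i,
  x t i 0 - x s i 0 = \int[mu]_(r in `]s, t]) f r i 0.
Proof.
move=> s0 st tT i; rewrite !x_eq ?s0 ?(le_trans st tT) ?(le_trans s0 st) ?tT //.
by rewrite opprD addrACA subrr add0r RintegralB_itv0 // (integrableS_itv_cc _ tT (f_int i)).
Qed.

Let norm1_xB s t : 0 <= s -> s <= t -> t <= T -> norm1 (x t - x s) <= F t - F s.
Proof.
move=> s0 st tT; rewrite FB //.
have fi i : mu.-integrable `]s, t] (EFin \o (fun r => f r i 0)).
  exact: integrableS_itv_oc s0 tT (f_int i).
apply: (@le_trans _ _ (\sum_(i < n) \int[mu]_(r in `]s, t]) `|f r i 0|)).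
  apply: ler_sum => i _; rewrite !mxE xB //.
  exact: le_normr_Rintegral.
rewrite -Rintegral_sum // => [|i]; last exact: integrable_norm.
apply: le_Rintegral => //; first by apply: integrable_sumR => // i; exact: integrable_norm.
  exact: integrableS_itv_oc s0 tT psi_int.
by move=> r _; rewrite lerDl.
Qed.

Let norm1_x_le r : 0 <= r -> r <= T -> norm1 (x r) <= norm1 x0 + F T.
Proof.
move=> r0 rT; rewrite -[x r](addrNK (x 0)) x_at0 addrC.
apply: le_trans (norm1D _ _) _; rewrite lerD2l -x_at0.
apply: le_trans (norm1_xB (lexx 0) r0 rT) _.
by rewrite lerBlDr (le_trans (F_mono r0 rT (lexx T))) // lerDl.
Qed.

Let K := 2 * mxnorm1 P * (1 + (norm1 x0 + F T)).

Let K_ge0 : 0 <= K.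
Proof. by rewrite !mulr_ge0 ?mxnorm1_ge0 // !addr_ge0 ?norm1_ge0. Qed.

Let bform_f_int s t u : 0 <= s -> t <= T ->
  mu.-integrable `]s, t] (EFin \o (fun r => bform P (f r) u)).
Proof.
move=> s0 tT.
pose c j := \sum_(i < n) u i 0 * P i j.
have -> : (fun r => bform P (f r) u) = (fun r => \sum_(j < n) c j * f r j 0).
  by apply/funext => r; rewrite bformC // bformE.
apply: integrable_sumR => // j.
exact: integrableZl _ _ (integrableS_itv_oc s0 tT (f_int j)).
Qed.

Let qB s t : 0 <= s -> s <= t -> t <= T ->
  q t - q s = \int[mu]_(r in `]s, t]) bform P (f r) (x t + x s).
Proof.
move=> s0 st tT.
pose c j := \sum_(i < n) (x t + x s) i 0 * P i j.
have cfi j : mu.-integrable `]s, t] (EFin \o (fun r => c j * f r j 0)).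
  exact: integrableZl _ _ (integrableS_itv_oc s0 tT (f_int j)).
under eq_Rintegral do rewrite bformC // bformE.
rewrite Rintegral_sum //.
have -> : q t - q s = bform P (x t + x s) (x t - x s).
  by rewrite /q bformDl !bformDr !bformNr (bformC (x s) (x t) P_sym); ring.
rewrite bformE; apply: eq_bigr => j _.
rewrite RintegralZl ?(integrableS_itv_oc s0 tT (f_int j)) //.
by rewrite !mxE xB.
Qed.

Let incr_le s t r : 0 <= s -> s < r -> r <= t -> t <= T ->
  bform P (f r) (x t + x s) <= h r * q s + psi r * (K * (F t - F s)).
Proof.
move=> s0 sr rt tT.
have r0 : 0 <= r by apply: le_trans s0 (ltW sr).
have rT : r <= T by apply: le_trans rt tT.
apply: bform_perturb_le => //.
- by apply: x_ineq; rewrite r0 rT.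
- apply: le_trans (norm1_xB r0 rt tT) _.
  by rewrite lerD2l lerN2 F_mono // ltW.
- apply: le_trans (norm1_xB s0 (ltW sr) rT) _.
  by rewrite lerD2r F_mono // (le_trans rt).
- by rewrite lerDl.
- by rewrite lerDr norm1_ge0.
- exact: norm1_x_le r0 rT.
- exact: norm1_x_le s0 (le_trans (ltW sr) rT).
Qed.

Let q_step s t : 0 <= s -> s <= t -> t <= T ->
  q t <= q s * (1 + (H t - H s)) + K * (F t - F s) ^+ 2.
Proof.
move=> s0 st tT.
have h_oc := integrableS_itv_oc s0 tT h_int.
have psi_oc := integrableS_itv_oc s0 tT psi_int.
have int_le : \int[mu]_(r in `]s, t]) bform P (f r) (x t + x s) <=
    \int[mu]_(r in `]s, t]) (h r * q s + psi r * (K * (F t - F s))).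
  apply: le_Rintegral => //; first exact: bform_f_int.
    exact: integrableD _ (integrableZr _ _ h_oc) (integrableZr _ _ psi_oc).
  by move=> r /=; rewrite in_itv /= => /andP [sr rt]; exact: incr_le.
move: int_le; rewrite -qB // RintegralD ?(integrableZr _ _ h_oc) ?(integrableZr _ _ psi_oc) //.
rewrite !RintegralZr // -HB // -FB // expr2; nra.
Qed.

Let H_lower t : 0 <= t -> t <= T -> 0 <= H t + F T.
Proof.
move=> t0 tT.
have h_int_t := integrableS_itv_cc (lexx 0) tT h_int.
have H_le : - H t <= \int[mu]_(s in `[0, t]) `|h s|.
  apply: le_trans _ (le_normr_Rintegral _ h_int_t) => //.
  by have := ler_norm (- H t); rewrite normrN.
have absh_le : \int[mu]_(s in `[0, t]) `|h s| <= F t.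
  apply: le_Rintegral => //; first exact: integrable_norm.
    exact: integrableS_itv_cc (lexx 0) tT psi_int.
  by move=> r _; rewrite lerDr norm1_ge0.
rewrite addrC -[H t]opprK subr_ge0.
exact: le_trans H_le (le_trans absh_le (F_mono t0 tT (lexx T))).
Qed.

(* The points of the subdivision are equally spaced for [F t + t], which
   bounds the variation of [x] on each piece by [(F T + T) / N.+1]. *)
Let q_le_mesh (N : nat) : 0 < T ->
  q T <= q 0 * expR (H T) + expR (H T) * K * (F T + T) ^+ 2 * expR (F T) / N.+1%:R.
Proof.
move=> T_gt0; pose G t := F t + t.
have G_gap a b : 0 <= a -> a <= b -> b <= T -> b - a <= G b - G a.
  by move=> a0 ab bT; have := F_mono a0 ab bT; rewrite /G; lra.
have Gc : {within `[0, T], continuous G}.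
  move=> z; apply: continuousD; first exact: parameterized_integral_continuous.
  by apply: continuous_subspaceT => ?; exact: cvg_id.
have G0 : G 0 = 0 by rewrite /G /F Rintegral_itv_point addr0.
have [tau [tau0 tauN tau_in tau_mono]] := ivt_partition T_gt0 (ltn0Sn N) Gc G0 G_gap.
set d := G T / N.+1%:R in tau_in.
have d_ge0 : 0 <= d by rewrite divr_ge0 // /G addr_ge0 // ltW.
have step k : (k < N.+1)%N ->
    q (tau k.+1) <= q (tau k) * (1 + (H (tau k.+1) - H (tau k))) + K * d ^+ 2.
  move=> kN; have [/andP [a0 aT] Ga] := tau_in k (ltnW kN).
  have [/andP [b0 bT] Gb] := tau_in k.+1 kN.
  have ab := tau_mono k kN.
  apply: le_trans (q_step a0 ab bT) _; rewrite lerD2l ler_wpM2l //.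
  rewrite ler_sqr ?nnegrE ?subr_ge0 ?F_mono //.
  by move: Ga Gb; rewrite /G -natr1 mulrDl mul1r; lra.
have H_tau0 : H (tau 0%N) = 0 by rewrite tau0 /H Rintegral_itv_point.
have HE k : (k <= N.+1)%N -> 1 <= expR (H (tau k)) * expR (F T).
  move=> kN; have [/andP [a0 aT] _] := tau_in k kN.
  by rewrite -expRD -expR0 ler_expR H_lower.
have := discrete_gronwall (mulr_ge0 K_ge0 (sqr_ge0 d)) H_tau0 (fun k => P_psd _) HE step.
rewrite /= tau0 tauN => /le_trans; apply.
have -> : expR (H T) * (q 0 + N.+1%:R * (K * d ^+ 2 * expR (F T))) =
    q 0 * expR (H T) + expR (H T) * K * (F T + T) ^+ 2 * expR (F T) / N.+1%:R.
  by rewrite /d /G; field.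
exact: lexx.
Qed.

Let q_gronwall_pos : 0 < T -> q T <= q 0 * expR (H T).
Proof.
move=> T_gt0; apply/ler_addgt0Pr => e e_gt0.
set Z := expR (H T) * K * (F T + T) ^+ 2 * expR (F T).
have N_large : Z / e < (Num.truncn (Z / e)).+1%:R := truncnS_gt _.
apply: le_trans (q_le_mesh (Num.truncn (Z / e)) T_gt0) _; rewrite -/Z lerD2l.
by rewrite ler_pdivrMr ?ltr0n // mulrC -ler_pdivrMr // ltW.
Qed.

Lemma bform_gronwall :
  bform P (x T) (x T) <= bform P x0 x0 * expR (\int[mu]_(s in `[0, T]) h s).
Proof.
rewrite -x_at0; have [T_gt0|T_le0] := ltrP 0 T; first exact: q_gronwall_pos.
have -> : T = 0 by apply/le_anti/andP.
by rewrite Rintegral_itv_point expR0 mulr1.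
Qed.

End BformGronwall.

Section ComplexFacts.
Variable R : rcfType.
Local Notation C := (R[i]).
Local Notation nc := (@Normc.normc R).
Local Open Scope complex_scope.

Lemma normc_ge0 (z : C) : 0 <= nc z.
Proof. by case: z => a b; rewrite /Normc.normc sqrtr_ge0. Qed.

Lemma normc_sqr (z : C) : nc z ^+ 2 = complex.Re z ^+ 2 + complex.Im z ^+ 2.
Proof. by case: z => a b /=; rewrite sqr_sqrtr // addr_ge0 // sqr_ge0. Qed.

Lemma Re_le_normc (z : C) : complex.Re z <= nc z.
Proof.
case: z => a b /=; apply: le_trans (ler_norm a) _.
by rewrite -sqrtr_sqr ler_wsqrtr // lerDl sqr_ge0.
Qed.

Lemma normc_conj (z : C) : nc (conjc z) = nc z.
Proof. by case: z => a b /=; rewrite sqrrN. Qed.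

Lemma normc_real (r : R) : nc r%:C = `|r|.
Proof. by rewrite /Normc.normc /= expr0n /= addr0 sqrtr_sqr. Qed.

Lemma normc_sum_le (I : Type) (s : seq I) (F : I -> C) :
  nc (\sum_(i <- s) F i) <= \sum_(i <- s) nc (F i).
Proof.
elim: s => [|i s IH]; first by rewrite !big_nil Normc.normc0.
by rewrite !big_cons; apply: le_trans (le_normcD _ _) _; exact: lerD.
Qed.

Lemma Re_sum (I : Type) (s : seq I) (F : I -> C) :
  complex.Re (\sum_(i <- s) F i) = \sum_(i <- s) complex.Re (F i).
Proof.
elim: s => [|i s IH]; first by rewrite !big_nil.
by rewrite !big_cons -IH; case: (F i) => a b; case: (\sum_(j <- s) F j).
Qed.

Lemma Re_conjc (z : C) : complex.Re (conjc z) = complex.Re z.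
Proof. by case: z. Qed.

Lemma Re_realM (r : R) (z : C) : complex.Re (r%:C * z) = r * complex.Re z.
Proof. by case: z => a b /=; ring. Qed.

Lemma conjc_realM (r : R) (z : C) : conjc (r%:C * z) = r%:C * conjc z.
Proof. by case: z => a b; rewrite /= !mul0r; congr Complex; ring. Qed.

Lemma Re_conjcMM (y t : C) : complex.Re (conjc y * t * y) = complex.Re t * nc y ^+ 2.
Proof. by rewrite normc_sqr; case: y t => a b [c d] /=; ring. Qed.

Lemma Re_conjcM (y : C) : complex.Re (conjc y * y) = nc y ^+ 2.
Proof. by have := Re_conjcMM y 1; rewrite mulr1 mul1r. Qed.

End ComplexFacts.

Section LyapunovFromSchur.
Variables (R : rcfType) (n : nat) (A : 'M[R]_n) (U : 'M[R[i]]_n).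
Local Notation C := (R[i]).
Local Notation nc := (@Normc.normc R).
Local Notation toC := (real_complex R).
Local Notation mC M := (map_mx toC M).
Local Open Scope complex_scope.
Hypothesis U_unit : U \in unitmx.
Hypothesis UAU_trig : is_trig_mx (conjmx U (mC A)).
Hypothesis A_stable : forall z : C, eigenvalue (mC A) z -> complex.Re z < 0.

Let T := conjmx U (mC A).

Let UA : U *m mC A = T *m U.
Proof. by rewrite /T conjumx // mulmxKV. Qed.

Let ReT_lt0 i : complex.Re (T i i) < 0.
Proof.
apply: A_stable; apply: (@eigenvalue_conjmx _ _ _ U).
- exact: stablemx_unit.
- by rewrite row_free_unit.
rewrite [_ \in _]eigenvalue_root_char -/T char_poly_trig // /root horner_prod.
rewrite prodf_seq_eq0; apply/hasP; exists i; first by rewrite mem_index_enum.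
by rewrite /= !hornerE subrr.
Qed.

(* [1 / alpha] exceeds every [1 / (- Re (T i i))]; unlike a minimum, this also
   makes sense for an empty index set. *)
Let alpha := (\sum_(i < n) (- complex.Re (T i i))^-1 + 1)^-1.

Let inv_ReT_ge0 i : 0 <= (- complex.Re (T i i))^-1.
Proof. by rewrite invr_ge0 oppr_ge0 ltW. Qed.

Let alpha_gt0 : 0 < alpha.
Proof. by rewrite invr_gt0 ltr_pwDr // sumr_ge0. Qed.

Let ReT_le i : complex.Re (T i i) <= - alpha.
Proof.
have hi : 0 < - complex.Re (T i i) by rewrite oppr_gt0.
rewrite lerNr /alpha -[X in _ <= X]invrK lef_pV2 ?posrE ?invr_gt0 ?ltr_pwDr ?sumr_ge0 //.
by rewrite (bigD1 i) //= -addrA lerDl addr_ge0 // sumr_ge0.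
Qed.

Let tau := \sum_(i < n) \sum_(j < n) nc (T i j).

Let tau_ge0 : 0 <= tau.
Proof. by rewrite sumr_ge0 // => i _; rewrite sumr_ge0 // => j _; exact: normc_ge0. Qed.

Let normcT_le i j : nc (T i j) <= tau.
Proof.
rewrite /tau (bigD1 i) //= (bigD1 j) //= -addrA lerDl addr_ge0 ?sumr_ge0 // => k _.
  exact: normc_ge0.
by rewrite sumr_ge0 // => l _; exact: normc_ge0.
Qed.

Let eps := alpha / (2 * (tau * n%:R + alpha)).

Let eps_gt0 : 0 < eps.
Proof. by rewrite divr_gt0 // mulr_gt0 // ltr_pwDr // mulr_ge0. Qed.

Let eps_le1 : eps <= 1.
Proof.
have tn : 0 <= tau * n%:R by rewrite mulr_ge0.
rewrite /eps ler_pdivrMr ?mul1r ?mulr_gt0 ?ltr_pwDr //.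
by have := alpha_gt0; lra.
Qed.

Let eps_tau : eps * tau * n%:R <= alpha / 2.
Proof.
have := alpha_gt0; have tn : 0 <= tau * n%:R by rewrite mulr_ge0.
have pos : 0 < 2 * (tau * n%:R + alpha) by rewrite mulr_gt0 // ltr_pwDr.
move=> a0; rewrite /eps -mulrA mulrAC ler_pdivrMr // mulrAC ler_pdivlMr //; nra.
Qed.

Let eps_exp_neq0 k : eps ^+ k != 0.
Proof. by rewrite expf_neq0 // lt0r_neq0. Qed.

(* [T] is lower triangular; conjugating it by [D = diag(1, eps, eps^2, ...)]
   multiplies [T i j] by [eps ^+ (i - j)], which makes the part below the
   diagonal small and leaves the diagonal unchanged. *)
Let D : 'M[C]_n := diag_mx (\row_(i < n) (eps ^+ i)%:C).
Let W := D *m U.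
Let Te := \matrix_(i < n, j < n) ((eps ^+ i / eps ^+ j)%:C * T i j).

Let D_conj (M : 'M[C]_n) :
  D *m M = (\matrix_(i, j) ((eps ^+ i / eps ^+ j)%:C * M i j)) *m D.
Proof.
apply/matrixP => i j; rewrite mul_diag_mx mul_mx_diag !mxE.
by rewrite mulrAC -rmorphM /= divfK ?eps_exp_neq0.
Qed.

Let WA : W *m mC A = Te *m W.
Proof. by rewrite /W -mulmxA UA mulmxA D_conj -mulmxA. Qed.

Let W_unit : W \in unitmx.
Proof.
rewrite /W unitmx_mul U_unit andbT unitmxE det_diag unitfE.
rewrite prodf_seq_neq0; apply/allP => i _ /=; rewrite mxE.
by rewrite (inj_eq (@complexI R)) eps_exp_neq0.
Qed.

Let Pm : 'M[R]_n := \matrix_(j, k) complex.Re (\sum_(i < n) conjc (W i j) * W i k).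
Let Hf (y z : 'cV[C]_n) := \sum_(i < n) conjc (y i 0) * z i 0.

Let W_mC_entry (x : 'cV[R]_n) i : (W *m mC x) i 0 = \sum_(j < n) (x j 0)%:C * W i j.
Proof. by rewrite mxE; apply: eq_bigr => j _; rewrite [mC x j 0]mxE mulrC. Qed.

Let bform_Pm (x z : 'cV[R]_n) : bform Pm x z = complex.Re (Hf (W *m mC x) (W *m mC z)).
Proof.
transitivity (\sum_(i < n) \sum_(j < n) \sum_(k < n)
    x j 0 * z k 0 * complex.Re (conjc (W i j) * W i k)); last first.
  rewrite /Hf Re_sum; apply: eq_bigr => i _; rewrite !W_mC_entry rmorph_sum /= mulr_suml Re_sum.
  apply: eq_bigr => j _; rewrite mulr_sumr Re_sum; apply: eq_bigr => k _.
  by rewrite conjc_realM mulrACA -rmorphM Re_realM.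
transitivity (\sum_(k < n) \sum_(j < n) \sum_(i < n)
    x j 0 * z k 0 * complex.Re (conjc (W i j) * W i k)).
  rewrite bformE; apply: eq_bigr => k _; rewrite mulr_suml; apply: eq_bigr => j _.
  by rewrite mxE Re_sum mulr_sumr mulr_suml; apply: eq_bigr => i _; ring.
under eq_bigr => k _ do rewrite exchange_big.
by rewrite exchange_big; under eq_bigr => i _ do rewrite exchange_big.
Qed.

Let Pm_sym : Pm^T = Pm.
Proof.
apply/matrixP => j k; rewrite !mxE !Re_sum; apply: eq_bigr => i _.
by rewrite -Re_conjc rmorphM /= conjcK mulrC.
Qed.

Let bform_Pm_sqr x : bform Pm x x = \sum_(i < n) nc ((W *m mC x) i 0) ^+ 2.
Proof. by rewrite bform_Pm /Hf Re_sum; apply: eq_bigr => i _; exact: Re_conjcM. Qed.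

Let bform_Pm_A x : bform Pm x (A *m x) = complex.Re (Hf (W *m mC x) (Te *m (W *m mC x))).
Proof. by rewrite bform_Pm (map_mxM toC) mulmxA WA -(mulmxA Te W). Qed.

Let normc_Te_lower (i j : 'I_n) : (j < i)%N -> nc (Te i j) <= eps * tau.
Proof.
move=> ji; have e_ge0 := ltW eps_gt0.
rewrite mxE Normc.normcM normc_real -expfB // ger0_norm; last exact: exprn_ge0.
have -> : (i - j = (i - j).-1.+1)%N by rewrite prednK // subn_gt0.
rewrite exprS -mulrA ler_wpM2l //; apply: le_trans (normcT_le i j).
by rewrite ler_piMl ?normc_ge0 // exprn_ile1 // eps_le1.
Qed.

Let Te_term_le (i j : 'I_n) (a b : C) : a = b \/ i != j ->
  complex.Re (conjc a * Te i j * b) <=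
  (if i == j then - alpha * nc a ^+ 2 else 0) + eps * tau * (nc a ^+ 2 + nc b ^+ 2) / 2.
Proof.
move=> ab_diag.
have et : 0 <= eps * tau by rewrite mulr_ge0 ?tau_ge0 ?(ltW eps_gt0).
have rest_ge0 : 0 <= eps * tau * (nc a ^+ 2 + nc b ^+ 2) / 2.
  by rewrite divr_ge0 // mulr_ge0 // addr_ge0 // sqr_ge0.
case: (ltngtP i j) => hij.
- rewrite mxE; move/is_trig_mxP: UAU_trig => -> //.
  by rewrite !mulr0 mul0r /= ifN ?add0r // neq_ltn hij.
- rewrite ifN ?add0r; last by rewrite neq_ltn hij orbT.
  apply: le_trans (Re_le_normc _) _.
  rewrite !Normc.normcM normc_conj.
  have Te_le := normc_Te_lower hij.
  have na := normc_ge0 a; have nb := normc_ge0 b; have nTe := normc_ge0 (Te i j).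
  have amgm : nc a * nc b <= (nc a ^+ 2 + nc b ^+ 2) / 2.
    by have := sqr_ge0 (nc a - nc b); rewrite sqrrB; lra.
  nra.
- have eij : i = j by apply: val_inj.
  subst j; rewrite eqxx; case: ab_diag => [<-|]; last by rewrite eqxx.
  rewrite mxE divff ?eps_exp_neq0 // mul1r Re_conjcMM.
  by have := ReT_le i; have := sqr_ge0 (nc a); nra.
Qed.

Let Re_Hf_Te_le (y : 'cV[C]_n) :
  complex.Re (Hf y (Te *m y)) <= - (alpha / 2) * \sum_(i < n) nc (y i 0) ^+ 2.
Proof.
set S := \sum_(i < n) nc (y i 0) ^+ 2.
have -> : Hf y (Te *m y) = \sum_(i < n) \sum_(j < n) conjc (y i 0) * Te i j * y j 0.
  rewrite /Hf; apply: eq_bigr => i _; rewrite mxE mulr_sumr.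
  by apply: eq_bigr => j _; rewrite mulrA.
rewrite Re_sum.
apply: (@le_trans _ _ (\sum_(i < n) \sum_(j < n)
   ((if i == j then - alpha * nc (y i 0) ^+ 2 else 0) +
    eps * tau * (nc (y i 0) ^+ 2 + nc (y j 0) ^+ 2) / 2))).
  apply: ler_sum => i _; rewrite Re_sum; apply: ler_sum => j _.
  by apply: Te_term_le; case: (eqVneq i j) => [->|]; [left|right].
rewrite (eq_bigr (fun i => - alpha * nc (y i 0) ^+ 2 +
    eps * tau / 2 * \sum_(j < n) (nc (y i 0) ^+ 2 + nc (y j 0) ^+ 2))); last first.
  move=> i _; rewrite big_split /= [eps * tau / 2 * _]mulr_sumr; congr (_ + _).
    rewrite (bigD1 i) //= eqxx big1 ?addr0 // => j.
    by rewrite eq_sym => /negbTE ->.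
  by apply: eq_bigr => j _; rewrite mulrAC.
rewrite big_split /= -mulr_sumr -mulr_sumr sum_pairD -/S.
have S_ge0 : 0 <= S by rewrite sumr_ge0 // => i _; rewrite sqr_ge0.
have -> : eps * tau / 2 * (S *+ (2 * n)) = eps * tau * n%:R * S.
  by rewrite -[S *+ _]mulr_natl natrM; field.
by have := eps_tau; have := alpha_gt0; nra.
Qed.

Let Wi := invmx W.
Let omega := \sum_(j < n) \sum_(i < n) nc (Wi j i).

Let normc_Wi_le j i : nc (Wi j i) <= omega.
Proof.
rewrite /omega (bigD1 j) //= (bigD1 i) //= -addrA lerDl addr_ge0 ?sumr_ge0 // => k _.
  exact: normc_ge0.
by rewrite sumr_ge0 // => l _; exact: normc_ge0.
Qed.

Let omega_ge0 : 0 <= omega.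
Proof. by rewrite sumr_ge0 // => j _; rewrite sumr_ge0 // => i _; exact: normc_ge0. Qed.

Let sqnorm2_le_W x :
  sqnorm2 x <= n%:R ^+ 2 * omega ^+ 2 * \sum_(i < n) nc ((W *m mC x) i 0) ^+ 2.
Proof.
set y := W *m mC x; set S := \sum_(i < n) _.
have x_Wi : mC x = Wi *m y by rewrite /y /Wi mulKmx.
have x_le j : x j 0 ^+ 2 <= omega ^+ 2 * (n%:R * S).
  have -> : x j 0 ^+ 2 = nc (mC x j 0) ^+ 2 by rewrite mxE normc_real real_normK ?num_real.
  have xj_le : nc (mC x j 0) <= omega * \sum_(i < n) nc (y i 0).
    rewrite x_Wi mxE; apply: le_trans (normc_sum_le _ _) _.
    rewrite mulr_sumr; apply: ler_sum => i _; rewrite Normc.normcM.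
    by rewrite ler_wpM2r ?normc_ge0.
  apply: le_trans (_ : _ <= (omega * \sum_(i < n) nc (y i 0)) ^+ 2) _.
    by rewrite ler_sqr ?nnegrE ?normc_ge0 // mulr_ge0 // sumr_ge0 // => i _; exact: normc_ge0.
  by rewrite exprMn ler_wpM2l ?sqr_ge0 // sqr_sum_le.
apply: le_trans (_ : _ <= \sum_(j < n) omega ^+ 2 * (n%:R * S)) _; first exact: ler_sum.
have -> : n%:R ^+ 2 * omega ^+ 2 * S = n%:R * (omega ^+ 2 * (n%:R * S)) by ring.
by rewrite sumr_const card_ord -[(_ * _) *+ n]mulr_natl.
Qed.

Lemma lyapunov_from_schur : exists (P : 'M[R]_n) (c p : R), [/\ P^T = P, 0 < c, 0 < p,
  forall x, p * sqnorm2 x <= bform P x x & forall x, bform P x (A *m x) <= - c * sqnorm2 x].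
Proof.
set K := n%:R ^+ 2 * omega ^+ 2.
have K_ge0 : 0 <= K by rewrite mulr_ge0 // sqr_ge0.
set p := (K + 1)^-1.
have p_gt0 : 0 < p by rewrite invr_gt0; lra.
have pK : p * K <= 1 by rewrite /p mulrC ler_pdivrMr ?mul1r; lra.
have low x : p * sqnorm2 x <= bform Pm x x.
  rewrite bform_Pm_sqr; have := sqnorm2_le_W x; rewrite -/K.
  set S := \sum_(i < n) _ => /(ler_wpM2l (ltW p_gt0)) le_pS; apply: le_trans le_pS _.
  by rewrite mulrA ler_piMl // sumr_ge0 // => i _; rewrite sqr_ge0.
exists Pm, (alpha / 2 * p), p; split => // [|x]; first by rewrite !mulr_gt0.
rewrite bform_Pm_A; apply: le_trans (Re_Hf_Te_le _) _.
have := low x; rewrite bform_Pm_sqr => low_x.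
by rewrite !mulNr lerN2 -[alpha / 2 * p * _]mulrA ler_wpM2l // divr_ge0 // ltW.
Qed.

End LyapunovFromSchur.

Lemma lyapunov_matrix (R : rcfType) (n : nat) (A : 'M[R]_n) : spectrum_in_Cminus A ->
  exists (P : 'M[R]_n) (c p : R), [/\ P^T = P, 0 < c, 0 < p,
    forall x, p * sqnorm2 x <= bform P x x &
    forall x, bform P x (A *m x) <= - c * sqnorm2 x].
Proof.
case: n A => [|n] A A_stable.
  exists 0, 1, 1; split => //; first by rewrite trmx0.
    by move=> x; rewrite /sqnorm2 big_ord0 mulr0 bformE big_ord0.
  by move=> x; rewrite /sqnorm2 big_ord0 mulr0 bformE big_ord0.
have [U U_unitary U_trig] := Schur (map_mx (real_complex R) A) (ltn0Sn n).
apply: (lyapunov_from_schur (unitarymx_unit U_unitary) U_trig).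
by move=> z /A_stable; rewrite -complexRe -[0 : R[i]]/(0%:C)%C ltcR.
Qed.

Section BilinearLyapunov.
Variables (R : realFieldType) (n m : nat) (A : 'M[R]_n) (N : 'I_m -> 'M[R]_n).
Variables (P : 'M[R]_n) (c p : R).
Hypotheses (c_gt0 : 0 < c) (p_gt0 : 0 < p).
Hypothesis P_low : forall y, p * sqnorm2 y <= bform P y y.
Hypothesis P_dec : forall y, bform P y (A *m y) <= - c * sqnorm2 y.

Let pmax := mxnorm1 P * n%:R + 1.
Let kappa := \sum_(k < m) mxnorm1 (P *m N k) * n%:R + 1.
Let beta := kappa ^+ 2 * m.+1%:R / c.

Let pmax_gt0 : 0 < pmax.
Proof. by rewrite ltr_pwDr // mulr_ge0 ?mxnorm1_ge0. Qed.

Let beta_ge0 : 0 <= beta.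
Proof. by apply: divr_ge0; [rewrite mulr_ge0 ?sqr_ge0 ?ler0n | exact: ltW]. Qed.

Let bform_N_le k y : `|bform P y (N k *m y)| <= kappa * sqnorm2 y.
Proof.
rewrite bform_mulmxr; apply: le_trans (bform_sqnorm2_le _ _) _.
rewrite ler_wpM2r ?sqnorm2_ge0 // /kappa (bigD1 k) //= -addrA lerDl.
by rewrite addr_ge0 // sumr_ge0 // => l _; rewrite mulr_ge0 ?mxnorm1_ge0.
Qed.

(* AM-GM, with the weight [c / m.+1] chosen so that the [m] terms together
   consume at most [c] of the decay rate. *)
Let amgm (w : R) : 2 * (`|w| * kappa) <= c / m.+1%:R + beta * w ^+ 2.
Proof.
set e := c / m.+1%:R; have e_gt0 : 0 < e by rewrite divr_gt0.
have -> : beta * w ^+ 2 = (`|w| * kappa) ^+ 2 / e.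
  by rewrite /beta /e exprMn real_normK ?num_real //; field; rewrite !lt0r_neq0.
have : 0 <= (e - `|w| * kappa) ^+ 2 / e by rewrite divr_ge0 ?sqr_ge0 // ltW.
have -> : (e - `|w| * kappa) ^+ 2 / e = e - 2 * (`|w| * kappa) + (`|w| * kappa) ^+ 2 / e.
  by field; rewrite lt0r_neq0.
lra.
Qed.

Let sum_amgm (w : 'I_m -> R) :
  2 * \sum_(k < m) `|w k| * kappa <= c + beta * \sum_(k < m) w k ^+ 2.
Proof.
rewrite mulr_sumr mulr_sumr; apply: le_trans (ler_sum _ (fun k _ => amgm (w k))) _.
rewrite big_split /= sumr_const card_ord lerD2r -[_ *+ m]mulr_natr mulrAC.
by rewrite ler_pdivrMr ?ltr0n // ler_wpM2l ?ler_nat ?leqnSn // ltW.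
Qed.

Lemma bilinear_lyapunov_ineq : exists a b : R, [/\ 0 < a, 0 <= b &
  forall (w : 'I_m -> R) (y : 'cV[R]_n),
    2 * bform P y (A *m y + \sum_(k < m) w k *: (N k *m y)) <=
    (- a + b * \sum_(k < m) w k ^+ 2) * bform P y y].
Proof.
exists (c / pmax), (beta / p); split; [exact: divr_gt0 | exact: divr_ge0 (ltW _) |].
move=> w y; set S := sqnorm2 y; set V := bform P y y; set Q := \sum_(k < m) w k ^+ 2.
have S_ge0 : 0 <= S := sqnorm2_ge0 y.
have Q_ge0 : 0 <= Q by rewrite sumr_ge0 // => k _; rewrite sqr_ge0.
have bilin_le : bform P y (\sum_(k < m) w k *: (N k *m y)) <= (\sum_(k < m) `|w k| * kappa) * S.
  rewrite bform_sumr mulr_suml; apply: ler_sum => k _; rewrite bformZr.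
  by apply: le_trans (ler_norm _) _; rewrite normrM -mulrA ler_wpM2l.
have cV : c * V / pmax <= c * S.
  by rewrite ler_pdivrMr // -mulrA ler_wpM2l ?(ltW c_gt0) // mulrC bform_le_sqnorm2.
have S_le : S <= V / p by rewrite ler_pdivlMr // mulrC P_low.
have SV : beta * Q * S <= beta / p * Q * V.
  have -> : beta / p * Q * V = beta * Q * (V / p) by ring.
  by rewrite ler_wpM2l // mulr_ge0.
have amgmS := ler_wpM2r S_ge0 (sum_amgm w); rewrite -/Q in amgmS.
have dec := P_dec y; rewrite -/S in dec.
have -> : (- (c / pmax) + beta / p * Q) * V = - (c * V / pmax) + beta / p * Q * V.
  by rewrite mulrDl mulNr mulrAC.
rewrite bformDr; lra.
Qed.

End BilinearLyapunov.

Section L2Facts.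
Variable R : realType.
Local Notation mu := (@lebesgue_measure R).

Lemma L2fun_sqr_integrable (g : R -> R) : L2fun g ->
  mu.-integrable `[0, +oo[ (EFin \o (fun s => g s ^+ 2)).
Proof.
case=> mg fin; apply/integrableP; split; first exact/measurable_EFinP/measurable_funX.
apply: le_lt_trans fin; rewrite le_eqVlt; apply/orP; left; apply/eqP.
by apply: eq_integral => s _ /=; rewrite ger0_norm // sqr_ge0.
Qed.

Lemma L2fun_sqr_integrable_itv (g : R -> R) (t : R) : L2fun g -> 0 <= t ->
  mu.-integrable `[0, t] (EFin \o (fun s => g s ^+ 2)).
Proof.
move=> Lg t0; apply: integrableS (L2fun_sqr_integrable Lg) => //.
by apply: subset_itv; rewrite bnd_simp.
Qed.

Lemma Rintegral_sqr_le_L2sqnorm (g : R -> R) (t : R) : L2fun g -> 0 <= t ->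
  \int[mu]_(s in `[0, t]) (g s ^+ 2) <= L2sqnorm g.
Proof.
move=> Lg t0; rewrite /L2sqnorm /Rintegral fine_le //.
- exact/integrable_fin_num/L2fun_sqr_integrable_itv.
- exact/integrable_fin_num/L2fun_sqr_integrable.
apply: ge0_subset_integral => //.
- by apply/measurable_EFinP; case: Lg => mg _; exact: measurable_funX.
- by move=> s _; rewrite lee_fin sqr_ge0.
- by apply: subset_itv; rewrite bnd_simp.
Qed.

Lemma L2fun_u0 (n m : nat) (N : 'I_m -> 'M[R]_n) (u : 'I_m -> R -> R) k :
  L2input u -> L2fun (u0 N u k).
Proof.
move=> Lu; rewrite /u0; case: eqP => _; last exact: Lu.
split; first exact: measurable_cst.
by under eq_integral do rewrite expr0n /=; rewrite integral0 ltry.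
Qed.

Lemma L2sqnorm_vec_ge0 (m : nat) (u : 'I_m -> R -> R) : 0 <= L2sqnorm_vec u.
Proof. by rewrite sumr_ge0 // => k _; apply: Rintegral_ge0 => s _; rewrite sqr_ge0. Qed.

End L2Facts.

Lemma bilin_rhs_u0 (R : realType) (n m : nat) (A : 'M[R]_n) (N : 'I_m -> 'M[R]_n)
    (u : 'I_m -> R -> R) (x : R -> 'cV[R]_n) (s : R) :
  bilin_rhs A N u x s = A *m x s + \sum_(k < m) u0 N u k s *: (N k *m x s).
Proof.
congr (_ + _); apply: eq_bigr => k _; rewrite /u0.
by case: eqP => [->|//]; rewrite mul0mx !scaler0.
Qed.

Lemma bilin_solution_bform_le (R : realType) (n m : nat) (A : 'M[R]_n)
    (N : 'I_m -> 'M[R]_n) (P : 'M[R]_n) (a b : R) :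
  P^T = P -> (forall y, 0 <= bform P y y) -> 0 <= b ->
  (forall (w : 'I_m -> R) y,
    2 * bform P y (A *m y + \sum_(k < m) w k *: (N k *m y)) <=
    (- a + b * \sum_(k < m) w k ^+ 2) * bform P y y) ->
  forall u, L2input u -> forall x0 x, is_bilin_solution A N u x0 x ->
  forall t, 0 <= t ->
    bform P (x t) (x t) <= bform P x0 x0 * expR (b * L2sqnorm_vec (u0 N u) - a * t).
Proof.
move=> P_sym P_psd b_ge0 P_bilin u Lu x0 x sol t t_ge0.
pose h r := - a + b * \sum_(k < m) u0 N u k r ^+ 2.
have sq_int k := L2fun_sqr_integrable_itv (L2fun_u0 N k Lu) t_ge0.
have sum_int : lebesgue_measure.-integrable `[0, t]
    (EFin \o (fun r => \sum_(k < m) u0 N u k r ^+ 2)) by exact: integrable_sumR.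
have bsum_int : lebesgue_measure.-integrable `[0, t]
    (EFin \o (fun r => b * \sum_(k < m) u0 N u k r ^+ 2)).
  by have := integrableZl _ b sum_int; apply.
have h_int : lebesgue_measure.-integrable `[0, t] (EFin \o h).
  exact: integrableD _ (integrable_cst_itv (- a) 0 t) bsum_int.
have x_eq r : 0 <= r <= t -> forall i, x r i 0 = x0 i 0 +
    \int[lebesgue_measure]_(s in `[0, r]) bilin_rhs A N u x s i 0.
  by case/andP => r0 _ i; exact: (sol r r0 i).2.
have x_ineq r : 0 <= r <= t ->
    2 * bform P (x r) (bilin_rhs A N u x r) <= h r * bform P (x r) (x r).
  by move=> _; rewrite bilin_rhs_u0.
apply: le_trans (bform_gronwall P_sym P_psd t_ge0 (fun i => (sol t t_ge0 i).1) h_int x_eq x_ineq) _.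
rewrite ler_wpM2l ?P_psd // ler_expR /h.
rewrite RintegralD //; last exact: (integrable_cst_itv (- a) 0 t).
rewrite Rintegral_cst_itv0 // RintegralZl // Rintegral_sum // addrC mulNr lerD2r.
rewrite ler_wpM2l //; apply: ler_sum => k _.
exact: Rintegral_sqr_le_L2sqnorm (L2fun_u0 N k Lu) t_ge0.
Qed.

Theorem theorem4p4 (R : realType) (n m : nat) (A : 'M[R]_n)
  (N : 'I_m -> 'M[R]_n) (hA : spectrum_in_Cminus A) :
  exists gamma k1 k2 : R, [/\ 0 < gamma, 0 < k1, 0 < k2 &
    forall (u : 'I_m -> R -> R), L2input u ->
    forall (x0 : 'cV[R]_n) (x : R -> 'cV[R]_n), is_bilin_solution A N u x0 x ->
    forall t : R, 0 <= t ->
      sqnorm2 (x t) <=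
        expR (gamma ^+ 2 * L2sqnorm_vec (u0 N u)) * sqnorm2 x0
        * (k1 * expR (- (k2 * t)))].
Proof.
have [P [c [p [P_sym c_gt0 p_gt0 P_low P_dec]]]] := lyapunov_matrix hA.
have [a [b [a_gt0 b_ge0 P_bilin]]] := bilinear_lyapunov_ineq N c_gt0 p_gt0 P_low P_dec.
have P_psd y : 0 <= bform P y y.
  exact: le_trans (mulr_ge0 (ltW p_gt0) (sqnorm2_ge0 y)) (P_low y).
set q := mxnorm1 P * n%:R + 1.
have q_gt0 : 0 < q by rewrite ltr_pwDr // mulr_ge0 ?mxnorm1_ge0.
exists (b + 1), (q / p), a; split => //; first by rewrite ltr_pwDr.
  exact: divr_gt0.
move=> u Lu x0 x sol t t_ge0; set L := L2sqnorm_vec (u0 N u).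
have b_le : b * L <= (b + 1) ^+ 2 * L.
  by rewrite ler_wpM2r ?L2sqnorm_vec_ge0 //; nra.
rewrite -(ler_pM2l p_gt0); apply: le_trans (P_low _) _.
apply: le_trans (bilin_solution_bform_le P_sym P_psd b_ge0 P_bilin Lu sol t_ge0) _.
have -> : p * (expR ((b + 1) ^+ 2 * L) * sqnorm2 x0 * (q / p * expR (- (a * t)))) =
    q * sqnorm2 x0 * expR ((b + 1) ^+ 2 * L - a * t).
  by rewrite expRD; field; rewrite lt0r_neq0.
by rewrite ler_pM ?P_psd ?expR_ge0 ?bform_le_sqnorm2 // ler_expR lerD2r.
Qed.
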